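(* Let $x=(x_n)_{n\in\mathbb{Z}}$ be an integer-valued sequence. For every $i\in\mathbb{Z}$, the set of descendants of $i$ in the record graph of $x$ is $$D(i)=\{j\in\mathbb{Z}: L_x(i)\le j\le i\},$$ where, if $L_x(i)=-\infty$, this is $\{j\in\mathbb{Z}:j\le i\}$.
   Context: Write $y(j,k)=\sum_{l=j}^{k-1}x_l$ for $j<k$. The record map is $R_x(i)=\inf\{n>i: y(i,n)\ge0\}$ if this set is nonempty, and $R_x(i)=i$ otherwise; the record graph has vertex set $\mathbb{Z}$ and directed edges $i\to R_x(i)$ for $R_x(i)\neq i$. $D(i)=\{i\}\cup\{j\ne i: R_x^n(j)=i\text{ for some }n\ge1\}$. Define $L_x(i)=\inf\{j<i: y(k,i)\ge0\text{ for all }j\le k<i\}\in\mathbb{Z}\cup\{-\infty\}$ if this set is nonempty, and $L_x(i)=i$ otherwise. *)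

From Stdlib Require Import ZArith Lia ClassicalEpsilon.
Open Scope Z_scope.

Fixpoint psum (x : Z -> Z) (j : Z) (m : nat) : Z :=
  match m with
  | O => 0
  | S m' => psum x j m' + x (j + Z.of_nat m')
  end.

(* y(j,k) = sum_{l=j}^{k-1} x_l  (empty sum = 0 when k <= j; only used for j < k) *)
Definition y (x : Z -> Z) (j k : Z) : Z := psum x j (Z.to_nat (k - j)).

Definition Rset (x : Z -> Z) (i n : Z) : Prop := i < n /\ 0 <= y x i n.

(* specification of R_x(i): the inf (= min, since the set is bounded below by i)
   if the set is nonempty, and i otherwise *)
Definition R_spec (x : Z -> Z) (i r : Z) : Prop :=
  (Rset x i r /\ forall n, Rset x i n -> r <= n) \/
  ((~ exists n, Rset x i n) /\ r = i).

Definition R (x : Z -> Z) (i : Z) : Z :=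
  epsilon (inhabits 0) (R_spec x i).

Definition InD (x : Z -> Z) (i j : Z) : Prop :=
  j = i \/ (j <> i /\ exists n : nat, (1 <= n)%nat /\ Nat.iter n (R x) j = i).

Definition Lset (x : Z -> Z) (i j : Z) : Prop :=
  j < i /\ forall k, j <= k < i -> 0 <= y x k i.

(* values in Z ∪ {-oo}: Some m = m, None = -oo.
   Spec of L_x(i): inf of Lset (min if bounded below, -oo if not) when Lset
   is nonempty, and i otherwise. *)
Definition L_spec (x : Z -> Z) (i : Z) (l : option Z) : Prop :=
  (exists m, l = Some m /\ Lset x i m /\ forall j, Lset x i j -> m <= j) \/
  (l = None /\ (exists j, Lset x i j) /\ forall m, exists j, Lset x i j /\ j < m) \/
  (l = Some i /\ ~ exists j, Lset x i j).

Definition L (x : Z -> Z) (i : Z) : option Z :=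
  epsilon (inhabits None) (L_spec x i).

From Stdlib Require Import ZArith Lia Classical ClassicalEpsilon Zwf.
Open Scope Z_scope.

(* Between j and its record R(j) every partial sum y(j,k) is negative, so every
   sum y(k,R(j)) with j <= k < R(j) is nonnegative.  Hence the descendants j of i
   all satisfy y(k,i) >= 0 for j <= k < i.  Conversely, such a j < i has i among
   its record candidates, so j < R(j) <= i and the property passes to R(j);
   iterating R from j therefore climbs to i.  The set of these j is an interval
   ending at i, and its left end is by definition L(i). *)

Lemma psum_add x j a b :
  psum x j (a + b)%nat = psum x j a + psum x (j + Z.of_nat a) b.
Proof.
  induction b as [|b IH]; simpl.
  - rewrite Nat.add_0_r; ring.
  - rewrite Nat.add_succ_r; simpl. rewrite IH, Nat2Z.inj_add, Z.add_assoc; ring.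
Qed.

Lemma y_split x k r i : k <= r <= i -> y x k i = y x k r + y x r i.
Proof.
  intros Hkri. unfold y.
  replace (Z.to_nat (i - k)) with (Z.to_nat (r - k) + Z.to_nat (i - r))%nat by lia.
  rewrite psum_add. do 3 f_equal. lia.
Qed.

Lemma y_refl x k : y x k k = 0.
Proof. unfold y; rewrite Z.sub_diag; reflexivity. Qed.

Lemma Z_exists_least (P : Z -> Prop) (b : Z) :
  (forall n, P n -> b <= n) -> (exists n, P n) ->
  exists m, P m /\ forall k, P k -> m <= k.
Proof.
  intros Hb [n Hn]. apply NNPP; intros Hnomin.
  induction n as [n IH] using (well_founded_ind (Zwf_well_founded b)).
  apply Hnomin; exists n; split; [exact Hn|].
  intros k Hk. destruct (Z_lt_le_dec k n) as [Hkn|]; [|assumption].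
  exfalso; apply (IH k); [split; [apply Hb|]|]; assumption.
Qed.

Lemma R_spec_R x i : R_spec x i (R x i).
Proof.
  unfold R; apply epsilon_spec.
  destruct (classic (exists n, Rset x i n)) as [Hne|Hno].
  - destruct (Z_exists_least (Rset x i) i) as [m Hm]; [now intros n []; lia|exact Hne|].
    exists m; left; exact Hm.
  - exists i; right; auto.
Qed.

Lemma L_spec_L x i : L_spec x i (L x i).
Proof.
  unfold L; apply epsilon_spec.
  destruct (classic (exists j, Lset x i j)) as [Hne|Hno].
  - destruct (classic (exists b, forall j, Lset x i j -> b <= j)) as [[b Hb]|Hunb].
    + destruct (Z_exists_least (Lset x i) b Hb Hne) as [m Hm].
      exists (Some m); left; exists m; tauto.
    + exists None; right; left; split; [reflexivity|split; [exact Hne|]].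
      intros m; apply NNPP; intros Hm; apply Hunb; exists m; intros j Hj.
      apply Z.nlt_ge; intros Hjm; apply Hm; exists j; auto.
  - exists (Some i); right; right; auto.
Qed.

Lemma R_le_Rset x j n : Rset x j n -> j < R x j <= n.
Proof.
  intros Hn. destruct (R_spec_R x j) as [[[HjR _] Hmin]|[Hno _]].
  - specialize (Hmin n Hn); lia.
  - exfalso; apply Hno; exists n; exact Hn.
Qed.

Lemma y_to_R_nonneg x j k : j <= k < R x j -> 0 <= y x k (R x j).
Proof.
  intros Hk. destruct (R_spec_R x j) as [[[_ HyR] Hmin]|[_ HR]]; [|lia].
  destruct (Z.eq_dec k j) as [->|Hkj]; [exact HyR|].
  assert (Hyjk : y x j k < 0).
  { apply Z.nle_gt; intros Hyjk.
    assert (Hjk : j < k) by lia.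
    specialize (Hmin k (conj Hjk Hyjk)); lia. }
  rewrite (y_split x j k (R x j)) in HyR by lia. lia.
Qed.

Definition suffix_nonneg (x : Z -> Z) (i j : Z) : Prop :=
  j <= i /\ forall k, j <= k < i -> 0 <= y x k i.

Lemma suffix_nonneg_iff_Lset x i j : suffix_nonneg x i j <-> j = i \/ Lset x i j.
Proof.
  unfold suffix_nonneg, Lset; split.
  - intros [Hji Hy]. destruct (Z.eq_dec j i); [left|right; split]; auto; lia.
  - intros [->|[Hji Hy]]; split; auto; lia.
Qed.

Lemma suffix_nonneg_R x i j : suffix_nonneg x i (R x j) -> suffix_nonneg x i j.
Proof.
  intros [HRi Hy]. destruct (R_spec_R x j) as [[[HjR _] _]|[_ HR]];
    [|rewrite HR in HRi, Hy; split; assumption].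
  split; [lia|]. intros k Hk.
  destruct (Z_lt_le_dec k (R x j)) as [HkR|]; [|apply Hy; lia].
  rewrite (y_split x k (R x j) i) by lia.
  assert (HkRj : 0 <= y x k (R x j)) by (apply y_to_R_nonneg; lia).
  assert (HRji : 0 <= y x (R x j) i).
  { destruct (Z.eq_dec (R x j) i) as [Heq|]; [rewrite Heq, y_refl; lia|apply Hy; lia]. }
  lia.
Qed.

Lemma suffix_nonneg_iter x i n j : Nat.iter n (R x) j = i -> suffix_nonneg x i j.
Proof.
  revert j; induction n as [|n IH]; intros j Hit.
  - simpl in Hit; subst j; split; [lia|intros; lia].
  - rewrite Nat.iter_succ_r in Hit. apply suffix_nonneg_R, IH, Hit.
Qed.

Lemma Lset_R x i j : Lset x i j -> j < R x j <= i /\ (R x j = i \/ Lset x i (R x j)).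
Proof.
  intros [Hji Hy].
  assert (HR : j < R x j <= i) by (apply R_le_Rset; split; [lia|apply Hy; lia]).
  split; [exact HR|].
  destruct (Z.eq_dec (R x j) i); [left; assumption|right; split; [lia|]].
  intros k Hk; apply Hy; lia.
Qed.

Lemma Lset_iter x i j : Lset x i j -> exists n, (1 <= n)%nat /\ Nat.iter n (R x) j = i.
Proof.
  induction j as [j IH] using (well_founded_ind (Zwf_up_well_founded i)).
  intros Hj. destruct (Lset_R x i j Hj) as [HR [HRi|HRL]].
  - exists 1%nat; split; [lia|exact HRi].
  - destruct (IH (R x j) HR HRL) as [n [Hn Hit]].
    exists (S n); split; [lia|]. rewrite Nat.iter_succ_r; exact Hit.
Qed.

Lemma InD_iff_suffix_nonneg x i j : InD x i j <-> suffix_nonneg x i j.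
Proof.
  rewrite suffix_nonneg_iff_Lset; split.
  - intros [->|[_ [n [_ Hit]]]]; [now left|].
    apply suffix_nonneg_iff_Lset, (suffix_nonneg_iter x i n j Hit).
  - intros [->|Hj]; [now left|right].
    split; [destruct Hj; lia|apply Lset_iter, Hj].
Qed.

Lemma Lset_upward x i j j' : Lset x i j -> j <= j' < i -> Lset x i j'.
Proof. intros [_ Hy] Hj'; split; [lia|intros k Hk; apply Hy; lia]. Qed.

Lemma suffix_nonneg_iff_L x i j :
  suffix_nonneg x i j <->
  match L x i with
  | Some l => l <= j <= i
  | None => j <= i
  end.
Proof.
  rewrite suffix_nonneg_iff_Lset.
  destruct (L_spec_L x i) as [[m [-> [Hm Hmin]]]|[[-> [_ Hunb]]|[-> Hno]]].
  - split.
    + intros [->|Hj]; [destruct Hm; lia|specialize (Hmin j Hj); destruct Hj; lia].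
    + intros Hj. destruct (Z.eq_dec j i); [now left|right].
      apply (Lset_upward x i m j Hm); lia.
  - split.
    + intros [->|[Hj _]]; lia.
    + intros Hj. destruct (Z.eq_dec j i); [now left|right].
      destruct (Hunb (j + 1)) as [j' [Hj' Hlt]]. apply (Lset_upward x i j' j Hj'); lia.
  - split.
    + intros [->|Hj]; [lia|exfalso; apply Hno; exists j; exact Hj].
    + intros Hj; left; lia.
Qed.

Theorem lemma2p16 (x : Z -> Z) (i : Z) :
  forall j : Z,
    InD x i j <->
    match L x i with
    | Some l => l <= j <= i
    | None => j <= i
    end.
Proof.
  intros j. rewrite InD_iff_suffix_nonneg. apply suffix_nonneg_iff_L.
Qed.
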